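(* No judgment aggregation rule that satisfies the equity property satisfies participation, and no judgment aggregation rule that satisfies the equity property satisfies antipodal strategyproofness (for Hamming-distance preferences extended to sets of judgments by any extension satisfying (R1) and (R2)).
   Context: An agenda is a finite nonempty list $\Phi=(\phi_1,\dots,\phi_m)$ of propositional formulas; a judgment is $J\in\{0,1\}^m$, $J(\phi_k)$ its $k$-th entry; the antipodal judgment $\overline{J}$ accepts exactly the issues rejected by $J$. $\mathcal{J}(\Phi)\subseteq\{0,1\}^m$ is the nonempty set of admissible judgments; the agenda may be chosen so that $\mathcal{J}(\Phi)$ is any prescribed nonempty set of vectors. For a finite set of agents $N$, a profile is $\mathbf{P}=(J_1,\dots,J_n)\in\mathcal{J}(\Phi)^n$; $\mathbf{P}_{-i}$ removes agent $i$, $(\mathbf{P}_{-i},J)$ replaces $i$'s judgment by $J$. A rule $F$ maps every profile (every finite group, every agenda) to a nonempty $F(\mathbf{P})\subseteq\mathcal{J}(\Phi)$. Hamming distance $H(J,J')=\sum_k|J(\phi_k)-J'(\phi_k)|$. Agent $i$ with truthful $J_i$: $J\succeq_i J'$ iff $H(J_i,J)\le H(J_i,J')$. Set preferences $\mathrel{\mathring{\succeq}}_i$ (strict part $\mathrel{\mathring{\succ}}_i$) satisfy (R1) $J\succeq_i J'$ iff $\{J\}\mathrel{\mathring{\succeq}}_i\{J'\}$, and (R2) $X\mathrel{\mathring{\succ}}_i Y$ implies there exist $J\in X$, $J'\in Y$ with $J\succ_i J'$ and $\{J,J'\}\not\subseteq X\cap Y$. Equity property: for all $\mathbf{P}$ and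 $J\in F(\mathbf{P})$ there are no $J'\in\mathcal{J}(\Phi)$, $i',j'\in N$ with $|H(J_i,J')-H(J_j,J')|<|H(J_{i'},J)-H(J_{j'},J)|$ for all $i,j\in N$. Participation: no $\mathbf{P}$, $i$ with $F(\mathbf{P}_{-i})\mathrel{\mathring{\succ}}_i F(\mathbf{P})$. Antipodal strategyproofness: no $\mathbf{P}$, $i$ with $F(\mathbf{P}_{-i},\overline{J_i})\mathrel{\mathring{\succ}}_i F(\mathbf{P})$. *)

From HB Require Import structures.
From mathcomp Require Import all_boot all_order.
From mathcomp Require Import finmap.

Set Implicit Arguments.
Unset Strict Implicit.
Unset Printing Implicit Defensive.

Local Open Scope fset_scope.

Inductive form : Type :=
  | FVar of nat
  | FNeg of form
  | FAnd of form & form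
  | FOr of form & form
  | FImp of form & form.

Fixpoint feval (v : nat -> bool) (f : form) : bool :=
  match f with
  | FVar n => v n
  | FNeg g => ~~ feval v g
  | FAnd g h => feval v g && feval v h
  | FOr g h => feval v g || feval v h
  | FImp g h => feval v g ==> feval v h
  end.

(* An agenda is a list Phi = (phi_1,...,phi_m) of formulas (required nonempty
   wherever used: 0 < size Phi).  A judgment is a 0/1 vector indexed by issues. *)
Definition judg (Phi : seq form) := {ffun 'I_(size Phi) -> bool}.

(* J is admissible iff the set {phi_k | J_k = 1} u {~phi_k | J_k = 0} is
   consistent, i.e. some valuation makes phi_k true exactly when J_k = 1. *)
Definition admissible (Phi : seq form) (J : judg Phi) : Prop :=
  exists v : nat -> bool,
    forall k : 'I_(size Phi), feval v (nth (FVar 0) Phi k) = J k.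

Definition antipodal (Phi : seq form) (J : judg Phi) : judg Phi :=
  [ffun k => ~~ J k].

Definition hamming (Phi : seq form) (J J' : judg Phi) : nat :=
  \sum_(k < size Phi) (J k != J' k).

Definition absdiff (m n : nat) : nat := (m - n) + (n - m).

(* A finite group of agents is a finite set N of agent names (naturals);
   a profile assigns a judgment to each agent of N. *)
Definition profile (Phi : seq form) (N : {fset nat}) := {ffun N -> judg Phi}.

Definition valid_profile (Phi : seq form) (N : {fset nat}) (P : profile Phi N) : Prop :=
  forall i : N, admissible (P i).

Definition remove_agent (Phi : seq form) (N : {fset nat}) (P : profile Phi N)
  (i : nat) : profile Phi (N `\ i) :=
  [ffun x => P (fincl (fsubsetDl N [fset i]) x)].

Definition replace_agent (Phi : seq form) (N : {fset nat}) (P : profile Phi N)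
  (i : N) (J : judg Phi) : profile Phi N :=
  [ffun x => if x == i then J else P x].

Definition rule := forall (Phi : seq form) (N : {fset nat}), profile Phi N -> {set judg Phi}.

Definition is_rule (F : rule) : Prop :=
  forall (Phi : seq form) (N : {fset nat}) (P : profile Phi N),
    0 < size Phi -> valid_profile P ->
    (exists J, J \in F Phi N P) /\ (forall J, J \in F Phi N P -> admissible J).

(* Set preferences: pref Phi i Ji is agent i's relation (X weakly preferred to Y)
   on sets of judgments, where Ji is the agent's truthful judgment. *)
Definition set_pref := forall (Phi : seq form), nat -> judg Phi ->
  {set judg Phi} -> {set judg Phi} -> Prop.

Definition strict_pref (pref : set_pref) (Phi : seq form) (i : nat) (Ji : judg Phi)
  (X Y : {set judg Phi}) : Prop :=
  pref Phi i Ji X Y /\ ~ pref Phi i Ji Y X.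

Definition adm_set (Phi : seq form) (X : {set judg Phi}) : Prop :=
  forall J, J \in X -> admissible J.

Definition R1 (pref : set_pref) : Prop :=
  forall (Phi : seq form) (i : nat) (Ji J J' : judg Phi),
    0 < size Phi -> admissible Ji -> admissible J -> admissible J' ->
    (hamming Ji J <= hamming Ji J' <-> pref Phi i Ji [set J] [set J']).

Definition R2 (pref : set_pref) : Prop :=
  forall (Phi : seq form) (i : nat) (Ji : judg Phi) (X Y : {set judg Phi}),
    0 < size Phi -> admissible Ji -> adm_set X -> adm_set Y ->
    strict_pref pref i Ji X Y ->
    exists J J', [/\ J \in X, J' \in Y, hamming Ji J < hamming Ji J'
                   & ~ (J \in X :&: Y /\ J' \in X :&: Y)].

Definition equity (F : rule) : Prop :=
  forall (Phi : seq form) (N : {fset nat}) (P : profile Phi N),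
    0 < size Phi -> valid_profile P ->
    forall J, J \in F Phi N P ->
      ~ (exists J' : judg Phi, admissible J' /\
           exists i' j' : N, forall i j : N,
             absdiff (hamming (P i) J') (hamming (P j) J')
               < absdiff (hamming (P i') J) (hamming (P j') J)).

Definition participation (pref : set_pref) (F : rule) : Prop :=
  forall (Phi : seq form) (N : {fset nat}) (P : profile Phi N) (i : N),
    0 < size Phi -> valid_profile P ->
    ~ strict_pref pref (val i) (P i)
        (F Phi (N `\ val i) (remove_agent P (val i))) (F Phi N P).

Definition antipodal_sp (pref : set_pref) (F : rule) : Prop :=
  forall (Phi : seq form) (N : {fset nat}) (P : profile Phi N) (i : N),
    0 < size Phi -> valid_profile P -> admissible (antipodal (P i)) ->
    ~ strict_pref pref (val i) (P i)
        (F Phi N (replace_agent P i (antipodal (P i)))) (F Phi N P).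

From mathcomp Require Import all_boot all_order finmap.

Set Implicit Arguments.
Unset Strict Implicit.
Unset Printing Implicit Defensive.
Local Open Scope fset_scope.

(* The two impossibility results are proved by explicit counterexamples, in
   the style of the paper: each consists of an agenda over the two variables
   x = FVar 0 and y = FVar 1 and two three-agent (or two-agent) profiles.

   With these tools each counterexample reduces to computing two outcomes,
   which exhibit a voter who gains by abstaining (resp. by reporting the
   antipodal judgment). *)

(* [more_equitable P A J]: every gap between two agents' distances to A is
   smaller than some gap at J.  Equity forbids outputting such a J when A is
   admissible. *)
Definition more_equitable (Phi : seq form) (N : {fset nat}) (P : profile Phi N)
    (A J : judg Phi) : Prop :=
  exists i' j' : N, forall i j : N,
    absdiff (hamming (P i) A) (hamming (P j) A)
      < absdiff (hamming (P i') J) (hamming (P j') J).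

Lemma equity_singleton (F : rule) (Phi : seq form) (N : {fset nat})
    (P : profile Phi N) (A : judg Phi) :
  is_rule F -> equity F -> 0 < size Phi -> valid_profile P -> admissible A ->
  (forall J, admissible J -> J = A \/ more_equitable P A J) ->
  F Phi N P = [set A].
Proof.
move=> ruleF eqF Phi_ne validP admA beaten.
have [[J0 J0F] admF] := ruleF _ _ P Phi_ne validP.
have onlyA J : J \in F Phi N P -> J = A.
  move=> JF; have [//|betterA] := beaten J (admF J JF).
  by case: (eqF _ _ P Phi_ne validP J JF); exists A.
apply/setP => J; rewrite in_set1; apply/idP/eqP => [/onlyA // | ->].
by rewrite -(onlyA J0).
Qed.

Lemma singleton_strict_pref (pref : set_pref) (Phi : seq form) (i : nat)
    (Ji A B : judg Phi) :
  R1 pref -> 0 < size Phi -> admissible Ji -> admissible A -> admissible B ->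
  hamming Ji B < hamming Ji A -> strict_pref pref i Ji [set B] [set A].
Proof.
move=> R1pref Phi_ne admJi admA admB closer; split.
  by apply/(R1pref _ _ _ _ _ Phi_ne admJi admB admA); apply: ltnW.
by move/(R1pref _ _ _ _ _ Phi_ne admJi admA admB); rewrite leqNgt closer.
Qed.

Definition judg_of (Phi : seq form) (v : nat -> bool) : judg Phi :=
  [ffun k : 'I_(size Phi) => feval v (nth (FVar 0) Phi k)].

Lemma admissibleE (Phi : seq form) (J : judg Phi) :
  admissible J <-> exists v, J = judg_of Phi v.
Proof.
split=> [[v Jv] | [v ->]]; exists v; last by move=> k; rewrite ffunE.
by apply/ffunP => k; rewrite ffunE Jv.
Qed.

Lemma admissible_judg_of (Phi : seq form) (v : nat -> bool) :
  admissible (judg_of Phi v).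
Proof. by apply/admissibleE; exists v. Qed.

Lemma judg_of_eq (Phi : seq form) (v w : nat -> bool) :
  all (fun g => feval v g == feval w g) Phi -> judg_of Phi v = judg_of Phi w.
Proof.
move/(all_nthP (FVar 0)) => agree; apply/ffunP => k; rewrite !ffunE.
exact/eqP/agree.
Qed.

Lemma antipodal_judg_of (Phi : seq form) (v w : nat -> bool) :
  all (fun g => feval w g == ~~ feval v g) Phi ->
  antipodal (judg_of Phi v) = judg_of Phi w.
Proof.
move/(all_nthP (FVar 0)) => opp; apply/ffunP => k; rewrite !ffunE.
exact/esym/eqP/opp.
Qed.

Definition vdist (Phi : seq form) (v w : nat -> bool) : nat :=
  count (fun g => feval v g != feval w g) Phi.

Lemma hamming_judg_of (Phi : seq form) (v w : nat -> bool) :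
  hamming (judg_of Phi v) (judg_of Phi w) = vdist Phi v w.
Proof.
rewrite /hamming /vdist -sum1_count (big_nth (FVar 0)) big_mkord [RHS]big_mkcond.
by apply: eq_bigr => k _; rewrite !ffunE; case: (_ != _).
Qed.

Definition profile_of (Phi : seq form) (N : {fset nat}) (f : nat -> nat -> bool)
    : profile Phi N :=
  [ffun z => judg_of Phi (f (val z))].

Lemma valid_profile_of (Phi : seq form) (N : {fset nat}) (f : nat -> nat -> bool) :
  valid_profile (profile_of Phi N f).
Proof. by move=> z; rewrite ffunE; apply: admissible_judg_of. Qed.

Lemma remove_profile_of (Phi : seq form) (N : {fset nat}) (f : nat -> nat -> bool)
    (i : nat) :
  remove_agent (profile_of Phi N f) i = profile_of Phi (N `\ i) f.
Proof. by apply/ffunP => z; rewrite !ffunE. Qed.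

Lemma replace_profile_of (Phi : seq form) (N : {fset nat}) (f : nat -> nat -> bool)
    (i : N) (w : nat -> bool) :
  replace_agent (profile_of Phi N f) i (judg_of Phi w)
    = profile_of Phi N (fun n => if n == val i then w else f n).
Proof. by apply/ffunP => z; rewrite !ffunE -val_eqE; case: ifP. Qed.

Lemma more_equitable_by_check (Phi : seq form) (N : {fset nat}) (s : seq nat)
    (f : nat -> nat -> bool) (u w : nat -> bool) (i' j' : nat) :
  {subset N <= s} -> i' \in N -> j' \in N ->
  all (fun i => all (fun j =>
         absdiff (vdist Phi (f i) u) (vdist Phi (f j) u)
           < absdiff (vdist Phi (f i') w) (vdist Phi (f j') w)) s) s ->
  more_equitable (profile_of Phi N f) (judg_of Phi u) (judg_of Phi w).
Proof.
move=> Ns i'N j'N /allP check; exists [` i'N], [` j'N] => i j.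
rewrite !ffunE !hamming_judg_of.
by have /allP := check _ (Ns _ (fsvalP i)); apply; apply: Ns (fsvalP j).
Qed.

Fixpoint vars (g : form) : seq nat :=
  match g with
  | FVar n => [:: n]
  | FNeg g1 => vars g1
  | FAnd g1 g2 | FOr g1 g2 | FImp g1 g2 => vars g1 ++ vars g2
  end.

Definition two_var (Phi : seq form) : bool :=
  all (fun g => all (fun n => n < 2) (vars g)) Phi.

Definition valuation (b : bool * bool) (n : nat) : bool :=
  if n == 0 then b.1 else b.2.

Lemma feval_vars (v w : nat -> bool) (g : form) :
  {in vars g, v =1 w} -> feval v g = feval w g.
Proof.
elim: g => [n | g IH | g1 IH1 g2 IH2 | g1 IH1 g2 IH2 | g1 IH1 g2 IH2] /= agree;
  first (by apply: agree; rewrite inE); first by rewrite IH.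
all: rewrite IH1 ?IH2 // => n n_in; apply: agree; rewrite mem_cat n_in ?orbT //.
Qed.

Lemma two_var_admissible (Phi : seq form) (J : judg Phi) :
  two_var Phi -> admissible J -> exists b, J = judg_of Phi (valuation b).
Proof.
move=> /(all_nthP (FVar 0)) twoPhi /admissibleE [v ->]; exists (v 0, v 1).
apply/ffunP => k; rewrite !ffunE; apply: feval_vars => n n_in.
have := allP (twoPhi _ (ltn_ord k)) n n_in.
by rewrite /valuation; case: n {n_in} => [|[|]].
Qed.

Lemma two_var_outcome (F : rule) (Phi : seq form) (N : {fset nat})
    (f : nat -> nat -> bool) (a : bool * bool) :
  is_rule F -> equity F -> 0 < size Phi -> two_var Phi ->
  (forall b, judg_of Phi (valuation b) = judg_of Phi (valuation a)
             \/ more_equitable (profile_of Phi N f) (judg_of Phi (valuation a))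
                                (judg_of Phi (valuation b))) ->
  F Phi N (profile_of Phi N f) = [set judg_of Phi (valuation a)].
Proof.
move=> ruleF eqF Phi_ne twoPhi beaten.
apply: equity_singleton => //; first exact: valid_profile_of.
  exact: admissible_judg_of.
by move=> J /(two_var_admissible twoPhi) [b ->].
Qed.

Definition voters (s : seq (bool * bool)) (n : nat) : nat -> bool :=
  valuation (nth (false, false) s n).

Definition N3 : {fset nat} := [fset 0; 1; 2].

Lemma N3_sub : {subset N3 <= [:: 0; 1; 2]}.
Proof. by move=> n; rewrite !inE -orbA. Qed.

Lemma N3_without2_sub : {subset N3 `\ 2 <= [:: 0; 1]}.
Proof. by move=> n; rewrite !inE; case: n => [|[|[|n]]]. Qed.

Definition x : form := FVar 0.
Definition y : form := FVar 1.

(* Participation.  Agenda (x \/ y, ~x /\ y, ~x /\ y, x, x); agents 0, 1, 2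
   hold the judgments induced by (x, y) = (0, 0), (0, 1), (1, 0), at
   Hamming distances 3, 3 and 4 from each other. *)
Definition Phi_part : seq form :=
  [:: FOr x y; FAnd (FNeg x) y; FAnd (FNeg x) y; x; x].

Definition voters_part : nat -> nat -> bool :=
  voters [:: (false, false); (false, true); (true, false)].

Lemma outcome_part (F : rule) :
  is_rule F -> equity F ->
  F Phi_part N3 (profile_of Phi_part N3 voters_part)
    = [set judg_of Phi_part (valuation (false, false))].
Proof.
move=> ruleF eqF; apply: two_var_outcome => //.
case=> [[] []]; last by left.
all: right;
  apply: (more_equitable_by_check (s := [:: 0; 1; 2]) (i' := 1) (j' := 2)) => //;
  by [exact: N3_sub | rewrite !inE].
Qed.

Lemma outcome_part_without2 (F : rule) :
  is_rule F -> equity F ->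
  F Phi_part (N3 `\ 2) (profile_of Phi_part (N3 `\ 2) voters_part)
    = [set judg_of Phi_part (valuation (true, false))].
Proof.
move=> ruleF eqF; apply: two_var_outcome => //.
case=> [[] []]; [left; exact: judg_of_eq | by left | |].
all: right;
  apply: (more_equitable_by_check (s := [:: 0; 1]) (i' := 0) (j' := 1)) => //;
  by [exact: N3_without2_sub | rewrite !inE].
Qed.

(* Agent 2 strictly gains by abstaining. *)
Lemma not_participation (pref : set_pref) (F : rule) :
  R1 pref -> is_rule F -> equity F -> ~ participation pref F.
Proof.
move=> R1pref ruleF eqF part.
have agent2 : 2 \in N3 by rewrite !inE.
apply: (part Phi_part N3 (profile_of Phi_part N3 voters_part) [` agent2] isT).
  exact: valid_profile_of.
rewrite remove_profile_of outcome_part // outcome_part_without2 // ffunE.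
apply: singleton_strict_pref => //; try exact: admissible_judg_of.
by rewrite !hamming_judg_of.
Qed.

(* Agenda (y, y, y, ~x /\ y, ~x /\ y, x xor y);
   agents 0, 1, 2 hold the judgments induced by (x, y) = (0, 0), (0, 1),
   (1, 1).  The judgment induced by (0, 1) accepts every issue, so it is the
   antipodal of agent 0's judgment, which accepts none. *)
Definition Phi_anti : seq form :=
  [:: y; y; y; FAnd (FNeg x) y; FAnd (FNeg x) y;
      FAnd (FOr x y) (FNeg (FAnd x y))].

Definition voters_anti : nat -> nat -> bool :=
  voters [:: (false, false); (false, true); (true, true)].

Lemma outcome_anti (F : rule) :
  is_rule F -> equity F ->
  F Phi_anti N3 (profile_of Phi_anti N3 voters_anti)
    = [set judg_of Phi_anti (valuation (true, true))].
Proof.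
move=> ruleF eqF; apply: two_var_outcome => //.
case=> [[] []]; first by left.
all: right;
  apply: (more_equitable_by_check (s := [:: 0; 1; 2]) (i' := 0) (j' := 1)) => //;
  by [exact: N3_sub | rewrite !inE].
Qed.

Lemma outcome_anti_manipulated (F : rule) (agent0 : N3) :
  val agent0 = 0 -> is_rule F -> equity F ->
  F Phi_anti N3 (profile_of Phi_anti N3
                   (fun n => if n == val agent0 then valuation (false, true)
                             else voters_anti n))
    = [set judg_of Phi_anti (valuation (true, false))].
Proof.
move=> -> ruleF eqF; apply: two_var_outcome => //.
case=> [[] []]; [| by left | |].
all: right;
  apply: (more_equitable_by_check (s := [:: 0; 1; 2]) (i' := 0) (j' := 2)) => //;
  by [exact: N3_sub | rewrite !inE].
Qed.

(* Agent 0 strictly gains by reporting the antipodal judgment. *)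
Lemma not_antipodal_sp (pref : set_pref) (F : rule) :
  R1 pref -> is_rule F -> equity F -> ~ antipodal_sp pref F.
Proof.
move=> R1pref ruleF eqF anti.
have agent0 : 0 \in N3 by rewrite !inE.
have flip : antipodal (profile_of Phi_anti N3 voters_anti [` agent0])
              = judg_of Phi_anti (valuation (false, true)).
  by rewrite ffunE; apply: antipodal_judg_of.
apply: (anti Phi_anti N3 (profile_of Phi_anti N3 voters_anti) [` agent0] isT).
- exact: valid_profile_of.
- by rewrite flip; apply: admissible_judg_of.
rewrite flip replace_profile_of outcome_anti // outcome_anti_manipulated // ffunE.
apply: singleton_strict_pref => //; try exact: admissible_judg_of.
by rewrite !hamming_judg_of.
Qed.

Theorem mainTheorem9 (pref : set_pref) (F : rule) :
  R1 pref -> R2 pref -> is_rule F -> equity F ->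
  ~ participation pref F /\ ~ antipodal_sp pref F.
Proof.
move=> R1pref _ ruleF eqF; split.
- exact: not_participation.
- exact: not_antipodal_sp.
Qed.
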